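(* There is an absolute constant $c>0$ such that the following holds. Let $G=K_n$ with $n\ge 2$, let $F$ be a regular distribution, and let $p=F^{-1}(1-1/n)\cdot(1-1/n)^{n-1}$. Then $$\inf_{\mathbf{T}\in\mathcal{N}_{p\cdot\mathbf{1}}}\mathcal{R}(p\cdot\mathbf{1},\mathbf{T})\ \ge\ c\cdot\sup_{\mathbf{p}'\in(0,\infty)^n}\ \sup_{\mathbf{T}\in\mathcal{N}_{\mathbf{p}'}}\mathcal{R}(\mathbf{p}',\mathbf{T}),$$ i.e. the worst equilibrium revenue at the uniform price $p$ is a constant fraction of the best equilibrium revenue over all (possibly non-uniform) price vectors.
   Context: Public-goods pricing game: $n$ buyers are the vertices of an undirected graph $G=([n],E)$, here the complete graph $K_n$; $N(i)=\{j:(i,j)\in E\}$ (so $i\notin N(i)$). Values $v_i$ are i.i.d. with cumulative distribution function $F$ on $[0,\infty)$, $F(\infty)=1$. An equilibrium for price vector $\mathbf{p}$ is a threshold vector $\mathbf{T}\in[0,\infty]^n$ (buyer $i$ purchases iff $v_i\ge T_i$) with $T_i=p_i/\prod_{j\in N(i)}F(T_j)$ for all $i$ (convention $c/0=\infty$); $\mathcal{N}_{\mathbf{p}}$ is the set of equilibria; $\mathcal{R}(\mathbf{p},\mathbf{T})=\sum_ip_i(1-F(T_i))$; $p\cdot\mathbf{1}$ is the uniform price vector. $F$ is regular: it is atomless, supported on an interval in $[0,\infty)$ with a density $f$ positive there, and the virtual value $\phi(x)=x-\frac{1-F(x)}{f(x)}$ is non-decreasing. $F^{-1}(q)=\min\{x: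 F(x)=q\}$. *)

From Stdlib Require Import Reals Lra List.
Import ListNotations.
Open Scope R_scope.

(* Extended non-negative thresholds: [0, infinity]. *)
Inductive ext : Type := Fin (x : R) | Inf.

Definition Fe (F : R -> R) (t : ext) : R :=
  match t with Fin x => F x | Inf => 1 end.

Definition is_cdf_nonneg (F : R -> R) : Prop :=
  (forall x y, x <= y -> F x <= F y) /\
  (forall x, 0 <= F x <= 1) /\
  (forall x, x < 0 -> F x = 0) /\
  (forall eps, 0 < eps -> exists M, forall x, M <= x -> 1 - eps < F x).

(* Regular distribution: atomless (continuous CDF), supported on an interval
   of [0,inf) (the interior of which is {x | 0 < F x < 1}) with a density f
   positive there, and virtual value x - (1 - F x)/f x non-decreasing. *)
Definition virtual_value (F f : R -> R) (x : R) : R := x - (1 - F x) / f x.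

Definition regular (F : R -> R) : Prop :=
  is_cdf_nonneg F /\
  continuity F /\
  exists f : R -> R,
    (forall x, 0 < F x < 1 -> derivable_pt_lim F x (f x) /\ 0 < f x) /\
    (forall x y, 0 < F x < 1 -> 0 < F y < 1 -> x <= y ->
        virtual_value F f x <= virtual_value F f y).

Definition is_Finv (F : R -> R) (q x0 : R) : Prop :=
  F x0 = q /\ forall x, F x = q -> x0 <= x.

(* Buyers are 0..n-1; the graph is the complete graph K_n, so
   N(i) = {j < n | j <> i}. *)
Definition neighbors (n i : nat) : list nat :=
  filter (fun j => negb (Nat.eqb j i)) (seq 0 n).

Definition prod_list (l : list R) : R := fold_right Rmult 1 l.
Definition sum_list (l : list R) : R := fold_right Rplus 0 l.

(* T is an equilibrium for prices p: T_i = p_i / prod_{j in N(i)} F(T_j),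
   with convention c/0 = infinity. *)
Definition is_equilibrium (F : R -> R) (n : nat) (p : nat -> R) (T : nat -> ext)
  : Prop :=
  forall i, (i < n)%nat ->
    let P := prod_list (map (fun j => Fe F (T j)) (neighbors n i)) in
    (P = 0 -> T i = Inf) /\ (P <> 0 -> T i = Fin (p i / P)).

Definition revenue (F : R -> R) (n : nat) (p : nat -> R) (T : nat -> ext) : R :=
  sum_list (map (fun i => p i * (1 - Fe F (T i))) (seq 0 n)).

From Stdlib Require Import Reals Lra List Lia Classical.
Open Scope R_scope.

(* Let q = 1 - 1/n, q0 = F^-1(q) and p = q0 q^(n-1).
   - Upper bound.  In any equilibrium at positive prices, buyer i pays
     p'_i = t P_i with t her threshold and P_i = prod_{j<>i} F(T'_j).  If
     F(t) < q then t < q0 and she contributes at most q0 (1 - F t) P_i;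
     otherwise regularity (concavity of the revenue curve) bounds
     t (1 - F t) by 2 q0 (1 - q).  The terms (1 - x_i) prod_{j<>i} x_j sum
     to at most 1, so the revenue is at most q0 (1 + 2 n (1 - q)) = 3 q0.
   - Lower bound.  At the uniform price the revenue is p times the expected
     demand, which is at least min(n (1 - q), 1 - p/q0) >= 1/3 because
     q^(n-1) < 2/3; moreover p >= q0/3 because q^(n-1) >= 1/e. *)

(* The indices of [l] other than [i]; the neighbourhood [neighbors n i] in
   [K_n] is, by definition, [others (seq 0 n) i]. *)
Definition others (l : list nat) (i : nat) : list nat :=
  filter (fun j => negb (Nat.eqb j i)) l.

Lemma others_cons_same (a : nat) (l : list nat) :
  ~ In a l -> others (a :: l) a = l.
Proof.
  unfold others; simpl; rewrite Nat.eqb_refl; simpl.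
  induction l as [|b l IH]; simpl; intros Hna; [reflexivity|].
  destruct (Nat.eqb_spec b a) as [->|_]; [exfalso; auto|].
  simpl; f_equal; auto.
Qed.

Lemma others_cons_other (a i : nat) (l : list nat) :
  a <> i -> others (a :: l) i = a :: others l i.
Proof.
  intro Hai; unfold others; simpl.
  destruct (Nat.eqb_spec a i); [contradiction | reflexivity].
Qed.

Lemma sum_le (g h : nat -> R) (l : list nat) :
  (forall i, In i l -> g i <= h i) -> sum_list (map g l) <= sum_list (map h l).
Proof.
  induction l as [|a l IH]; simpl; intros H; [lra|].
  assert (g a <= h a) by auto.
  assert (sum_list (map g l) <= sum_list (map h l)) by auto.
  lra.
Qed.

Lemma sum_plus (g h : nat -> R) (l : list nat) :
  sum_list (map (fun i => g i + h i) l) = sum_list (map g l) + sum_list (map h l).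
Proof. induction l as [|a l IH]; simpl; [ring|]. rewrite IH; ring. Qed.

Lemma sum_scal (g : nat -> R) (a : R) (l : list nat) :
  sum_list (map (fun i => a * g i) l) = a * sum_list (map g l).
Proof. induction l as [|b l IH]; simpl; [ring|]. rewrite IH; ring. Qed.

Lemma sum_const (b : R) (l : list nat) :
  sum_list (map (fun _ => b) l) = b * INR (length l).
Proof.
  induction l as [|a l IH]; [simpl; ring|].
  cbn [map length]; rewrite S_INR; simpl; rewrite IH; ring.
Qed.

Lemma sum_nonneg (g : nat -> R) (l : list nat) :
  (forall i, 0 <= g i) -> 0 <= sum_list (map g l).
Proof. intro H. induction l as [|a l IH]; simpl; [lra|]. specialize (H a); lra. Qed.

Lemma sum_filter_le (g : nat -> R) (h : nat -> bool) (l : list nat) :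
  (forall i, 0 <= g i) -> sum_list (map g (filter h l)) <= sum_list (map g l).
Proof.
  intro H. induction l as [|a l IH]; simpl; [lra|].
  destruct (h a); simpl; specialize (H a); lra.
Qed.

Lemma prod_bounds (x : nat -> R) (l : list nat) :
  (forall i, 0 <= x i <= 1) -> 0 <= prod_list (map x l) <= 1.
Proof.
  intro H. induction l as [|a l IH]; simpl; [lra|].
  destruct (H a), IH; split; nra.
Qed.

Lemma prod_ge_one_minus_sum (x : nat -> R) (l : list nat) :
  (forall i, 0 <= x i <= 1) ->
  1 - sum_list (map (fun i => 1 - x i) l) <= prod_list (map x l).
Proof.
  intro H. induction l as [|a l IH]; simpl; [lra|].
  destruct (H a).
  assert (0 <= sum_list (map (fun i => 1 - x i) l))
    by (apply sum_nonneg; intro i; destruct (H i); lra).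
  nra.
Qed.

(* Probabilistically: for independent events of probabilities [x_i], the
   chance that at most one of them fails is at most 1. *)
Lemma at_most_one_failure_le_1 (x : nat -> R) (l : list nat) :
  NoDup l -> (forall i, 0 <= x i <= 1) ->
  sum_list (map (fun i => (1 - x i) * prod_list (map x (others l i))) l)
  + prod_list (map x l) <= 1.
Proof.
  intros ND H. induction ND as [|a l Hna ND IH]; [simpl; lra|].
  cbn [map sum_list prod_list fold_right].
  rewrite others_cons_same by exact Hna.
  rewrite (map_ext_in (fun i => (1 - x i) * prod_list (map x (others (a :: l) i)))
             (fun i => x a * ((1 - x i) * prod_list (map x (others l i)))))
    by (intros i Hi; rewrite others_cons_other by (intros ->; contradiction);
        simpl; ring).
  rewrite sum_scal; fold (prod_list (map x l)).
  destruct (H a), (prod_bounds x l H).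
  nra.
Qed.
Lemma cdf_at_0 (F : R -> R) :
  is_cdf_nonneg F -> continuity F -> F 0 = 0.
Proof.
  intros [_ [H01 [Hneg _]]] Hcont.
  destruct (Req_dec (F 0) 0) as [e|ne]; [exact e|exfalso].
  assert (pos : 0 < F 0) by (destruct (H01 0); lra).
  destruct (Hcont 0 (F 0 / 2)) as [al [Hal Hx]]; [lra|].
  assert (Hd : R_dist (- (al / 2)) 0 < al).
  { unfold R_dist; rewrite Rminus_0_r, Rabs_Ropp, Rabs_right; lra. }
  assert (Hne : 0 <> - (al / 2)) by lra.
  specialize (Hx (- (al / 2)) (conj (conj I Hne) Hd)).
  simpl in Hx; unfold Rdist in Hx.
  rewrite (Hneg (- (al / 2))), Rminus_0_l, Rabs_Ropp, Rabs_right in Hx; lra.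
Qed.

Lemma quantile_pos (F : R -> R) (q q0 : R) :
  regular F -> 0 < q -> is_Finv F q q0 -> 0 < q0.
Proof.
  intros [Hcdf [Hcont _]] Hq [Hq0 _].
  pose proof (cdf_at_0 F Hcdf Hcont) as HF0.
  destruct Hcdf as [_ [_ [Hneg _]]].
  destruct (Rtotal_order q0 0) as [h|[->|h]]; [| lra | exact h].
  rewrite Hneg in Hq0 by exact h; lra.
Qed.

Lemma Fe_bounds (F : R -> R) (t : ext) : is_cdf_nonneg F -> 0 <= Fe F t <= 1.
Proof. intros [_ [H01 _]]. destruct t; simpl; [apply H01 | lra]. Qed.

(* Revenue-curve facts for a regular distribution, expressed with the
   shifted revenue [K_c(v) = v (1 - F v) + c F v], whose derivative on the
   support is [f v (c - phi v)], [phi] being the virtual value. *)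
Section RevenueCurve.

Variables F f : R -> R.
Hypothesis F_mono : forall x y, x <= y -> F x <= F y.
Hypothesis F_neg : forall x, x < 0 -> F x = 0.
Hypothesis F_cont : continuity F.
Hypothesis F_density :
  forall x, 0 < F x < 1 -> derivable_pt_lim F x (f x) /\ 0 < f x.
Hypothesis phi_mono : forall x y, 0 < F x < 1 -> 0 < F y < 1 -> x <= y ->
  virtual_value F f x <= virtual_value F f y.

Let phi := virtual_value F f.

Definition shifted_revenue (c v : R) : R := v * (1 - F v) + c * F v.

Lemma shifted_revenue_derive (c v : R) : 0 < F v < 1 ->
  derivable_pt_lim (shifted_revenue c) v (f v * (c - phi v)).
Proof.
  intro Hv; destruct (F_density v Hv) as [HF fpos].
  replace (f v * (c - phi v)) with (1 * (1 - F v) + v * (0 - f v) + c * f v)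
    by (unfold phi, virtual_value; field; lra).
  apply (derivable_pt_lim_plus (fun v => v * (1 - F v)) (fun v => c * F v)).
  - apply (derivable_pt_lim_mult id (fun v => 1 - F v)); [apply derivable_pt_lim_id|].
    apply (derivable_pt_lim_minus (fct_cte 1) F); [apply derivable_pt_lim_const | exact HF].
  - exact (derivable_pt_lim_scal F c v (f v) HF).
Qed.

Lemma shifted_revenue_mvt (c a b : R) : a < b -> 0 < F a -> F b < 1 ->
  exists xi, a < xi < b /\ 0 < F xi < 1 /\
    shifted_revenue c b - shifted_revenue c a = f xi * (c - phi xi) * (b - a).
Proof.
  intros Hab Ha Hb.
  assert (Hin : forall v, a <= v <= b -> 0 < F v < 1).
  { intros v [h1 h2]; pose proof (F_mono a v h1); pose proof (F_mono v b h2); lra. }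
  destruct (MVT_cor2 (shifted_revenue c) (fun v => f v * (c - phi v)) a b Hab)
    as [xi [Hxi Hbtw]].
  { intros v Hv; apply shifted_revenue_derive, Hin, Hv. }
  exists xi; split; [exact Hbtw | split; [apply Hin; lra | exact Hxi]].
Qed.

(* At an interior point [r], the slope of the revenue curve (in quantile
   space) dominates the chord to the point of quantile 1, where revenue is
   0: [r (1 - F r) + F r phi(r) >= 0]. *)
Lemma virtual_value_chord (r : R) : 0 < F r < 1 ->
  0 <= r * (1 - F r) + F r * phi r.
Proof.
  intro Hr.
  assert (r0 : 0 <= r) by (destruct (Rle_lt_dec 0 r) as [h|h]; [exact h | rewrite F_neg in Hr; lra]).
  set (c := phi r); set (k := r * (1 - F r) + F r * c).
  destruct (Rle_lt_dec 0 k) as [h|hk]; [exact h | exfalso].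
  assert (hc : c < 0) by (unfold k in hk; nra).
  set (y := k / (2 * c)).
  assert (Hy : y * (2 * c) = k) by (unfold y; field; lra).
  assert (y0 : 0 < y) by nra.
  assert (yr : y < F r) by (assert (0 <= r * (1 - F r)) by (apply Rmult_le_pos; lra); unfold k in Hy; nra).
  destruct (IVT (fun v => F v - y) (-1) r) as [a [[Ha1 Ha2] Ha]].
  - intro v; apply continuity_pt_minus; [apply F_cont | apply continuity_pt_const; intros ??; reflexivity].
  - lra.
  - rewrite F_neg by lra; lra.
  - lra.
  - assert (Fa : F a = y) by lra.
    assert (a0 : 0 <= a) by (destruct (Rle_lt_dec 0 a) as [h|h]; [exact h | rewrite F_neg in Fa; lra]).
    assert (ar : a < r) by (destruct Ha2 as [h| ->]; [exact h | lra]).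
    destruct (shifted_revenue_mvt c a r ar ltac:(lra) ltac:(lra)) as [xi [Hbtw [Hxi Hmvt]]].
    assert (phi xi <= c) by (apply phi_mono; [exact Hxi | exact Hr | lra]).
    assert (0 <= f xi * (c - phi xi) * (r - a))
      by (destruct (F_density xi Hxi); apply Rmult_le_pos; [apply Rmult_le_pos|]; lra).
    unfold shifted_revenue in Hmvt; rewrite Fa in Hmvt.
    assert (0 <= a * (1 - y)) by (apply Rmult_le_pos; lra).
    unfold k in *; nra.
Qed.

(* For regular [F], [v |-> v (1 - F v) / F v] is non-increasing beyond an
   interior point [r]; this is concavity of the revenue curve in quantile
   space, compared along chords ending at quantile 1. *)
Lemma revenue_ratio_antitone (r t : R) : 0 < F r < 1 -> r <= t -> F t < 1 ->
  t * (1 - F t) * F r <= r * (1 - F r) * F t.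
Proof.
  intros Hr Hrt Ht.
  destruct Hrt as [Hrt| <-]; [|lra].
  set (c := - (r * (1 - F r)) / F r).
  destruct (shifted_revenue_mvt c r t Hrt ltac:(lra) Ht) as [xi [Hbtw [Hxi Hmvt]]].
  assert (c <= phi r)
    by (unfold c; apply Rmult_le_reg_r with (F r); [lra|];
        pose proof (virtual_value_chord r Hr); field_simplify; lra).
  assert (phi r <= phi xi) by (apply phi_mono; [exact Hr | exact Hxi | lra]).
  assert (0 <= f xi * (phi xi - c) * (t - r))
    by (destruct (F_density xi Hxi); apply Rmult_le_pos; [apply Rmult_le_pos|]; lra).
  assert (Kr : shifted_revenue c r = 0) by (unfold shifted_revenue, c; field; lra).
  unfold shifted_revenue in Hmvt, Kr.
  assert (Hle : t * (1 - F t) <= - c * F t) by nra.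
  replace (- c) with (r * (1 - F r) / F r) in * by (unfold c; field; lra).
  apply Rmult_le_reg_r with (/ F r); [apply Rinv_0_lt_compat; lra|].
  replace (t * (1 - F t) * F r * / F r) with (t * (1 - F t)) by (field; lra).
  replace (r * (1 - F r) * F t * / F r) with (r * (1 - F r) / F r * F t) by (field; lra).
  exact Hle.
Qed.

End RevenueCurve.
Lemma regular_tail_revenue (F : R -> R) (q q0 t : R) :
  regular F -> 1/2 <= q < 1 -> is_Finv F q q0 -> q <= F t ->
  t * (1 - F t) <= 2 * q0 * (1 - q).
Proof.
  intros Hreg Hq [Hq0 Hmin] Ht.
  pose proof (quantile_pos F q q0 Hreg ltac:(lra) (conj Hq0 Hmin)) as q0pos.
  destruct Hreg as [[Hmono [H01 [Hneg _]]] [Hcont [f [Hdens Hphi]]]].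
  destruct (Req_dec (F t) 1) as [e|ne]; [rewrite e; nra|].
  assert (Ft1 : F t < 1) by (destruct (H01 t); lra).
  assert (tq0 : q0 <= t).
  { destruct (Rle_lt_dec q0 t) as [h|h]; [exact h|].
    pose proof (Hmono t q0 ltac:(lra)); apply Hmin; lra. }
  pose proof (revenue_ratio_antitone F f Hmono Hneg Hcont Hdens Hphi q0 t
                ltac:(lra) tq0 Ft1) as Hratio.
  rewrite Hq0 in Hratio.
  assert (q0 * (1 - q) * F t <= q0 * (1 - q)) by (assert (0 <= q0 * (1 - q)) by nra; nra).
  apply Rmult_le_reg_r with q; nra.
Qed.

(* Bernoulli-type bound [(1 + x)^k <= e^(k x)], from [1 + x <= e^x]. *)
Lemma pow_le_exp (x : R) (k : nat) : -1 <= x -> (1 + x) ^ k <= exp (INR k * x).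
Proof.
  intro Hx. induction k as [|k IH].
  - simpl; rewrite Rmult_0_l, exp_0; lra.
  - replace (INR (S k) * x) with (x + INR k * x) by (rewrite S_INR; ring).
    rewrite exp_plus; simpl.
    assert (1 + x <= exp x)
      by (destruct (Req_dec x 0) as [->|ne]; [rewrite exp_0; lra | left; apply exp_ineq1, ne]).
    apply Rmult_le_compat; [lra | apply pow_le; lra | assumption | exact IH].
Qed.

(* The discount factor [(1 - 1/n)^(n-1)] of the uniform price lies between
   [1/e >= 1/3] and [e^(-1/2) < 2/3]. *)
Lemma discount_lower (n : nat) : (2 <= n)%nat -> 1/3 <= (1 - 1 / INR n) ^ (n - 1).
Proof.
  intro Hn.
  set (m := INR (n - 1)).
  assert (m1 : 1 <= m) by (unfold m; replace 1 with (INR 1) by reflexivity; apply le_INR; lia).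
  assert (Hnm : INR n = m + 1) by (unfold m; rewrite minus_INR by lia; simpl; ring).
  assert (Hinv : 0 < 1 / m) by (apply Rdiv_lt_0_compat; lra).
  pose proof (pow_le_exp (1 / m) (n - 1) ltac:(lra)) as Hexp; fold m in Hexp.
  replace (m * (1 / m)) with 1 in Hexp by (field; lra).
  assert (Hprod : (1 - 1 / INR n) ^ (n - 1) * (1 + 1 / m) ^ (n - 1) = 1).
  { rewrite <- Rpow_mult_distr, Hnm.
    replace ((1 - 1 / (m + 1)) * (1 + 1 / m)) with 1 by (field; lra); apply pow1. }
  pose proof (pow_lt (1 + 1 / m) (n - 1) ltac:(lra)).
  pose proof exp_le_3.
  nra.
Qed.

Lemma discount_upper (n : nat) : (2 <= n)%nat -> (1 - 1 / INR n) ^ (n - 1) < 2/3.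
Proof.
  intro Hn.
  assert (Hn2 : 2 <= INR n) by (replace 2 with (INR 2) by (simpl; ring); apply le_INR; exact Hn).
  assert (Hinv : 1 / INR n <= 1 / 2)
    by (apply Rmult_le_reg_r with (INR n); [lra|]; field_simplify; lra).
  pose proof (pow_le_exp (- (1 / INR n)) (n - 1) ltac:(lra)) as Hexp.
  rewrite minus_INR in Hexp by lia; simpl INR in Hexp.
  replace (1 + - (1 / INR n)) with (1 - 1 / INR n) in Hexp by ring.
  replace ((INR n - 1) * - (1 / INR n)) with (- (1 / 2) + (1 / INR n - 1 / 2)) in Hexp
    by (field; lra).
  assert (exp (- (1 / 2) + (1 / INR n - 1 / 2)) <= exp (- (1 / 2))).
  { destruct (Req_dec (1 / INR n) (1 / 2)) as [e|ne];
      [rewrite e, Rminus_diag, Rplus_0_r; lra | left; apply exp_increasing; lra]. }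
  assert (1 + 1 / 2 < exp (1 / 2)) by (apply exp_ineq1; lra).
  assert (exp (- (1 / 2)) * exp (1 / 2) = 1) by (rewrite <- exp_plus, Rplus_opp_l; apply exp_0).
  pose proof (exp_pos (- (1 / 2))).
  nra.
Qed.

(* A single buyer facing the prices of the others: in equilibrium her
   payment is either made at a threshold below [q0], or is bounded by the
   tail bound above. *)
Lemma buyer_revenue_le (F : R -> R) (q q0 pi P : R) (Ti : ext) :
  regular F -> 1/2 <= q < 1 -> is_Finv F q q0 -> 0 < pi -> 0 <= P <= 1 ->
  (P = 0 -> Ti = Inf) -> (P <> 0 -> Ti = Fin (pi / P)) ->
  pi * (1 - Fe F Ti) <= q0 * ((1 - Fe F Ti) * P) + 2 * q0 * (1 - q).
Proof.
  intros Hreg Hq Hinv Hpi HP HInf HFin.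
  pose proof (quantile_pos F q q0 Hreg ltac:(lra) Hinv) as q0pos.
  pose proof Hreg as [[Hmono [H01 _]] _].
  destruct Hinv as [Hq0 Hmin].
  assert (0 <= 2 * q0 * (1 - q)) by nra.
  destruct (Req_dec P 0) as [e|ne].
  { rewrite (HInf e), e; simpl; lra. }
  rewrite (HFin ne); simpl.
  set (t := pi / P).
  assert (Hpi_eq : pi = t * P) by (unfold t; field; exact ne).
  assert (t0 : 0 < t) by (unfold t; apply Rdiv_lt_0_compat; lra).
  destruct (H01 t) as [Ft0 Ft1].
  rewrite Hpi_eq.
  destruct (Rlt_le_dec (F t) q) as [h|h].
  - assert (t < q0)
      by (destruct (Rlt_le_dec t q0) as [h'|h']; [exact h' | pose proof (Hmono q0 t h'); lra]).
    assert (t * ((1 - F t) * P) <= q0 * ((1 - F t) * P))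
      by (apply Rmult_le_compat_r; [apply Rmult_le_pos|]; lra).
    nra.
  - pose proof (regular_tail_revenue F q q0 t Hreg Hq (conj Hq0 Hmin) h).
    assert (0 <= t * (1 - F t)) by (apply Rmult_le_pos; lra).
    assert (0 <= q0 * ((1 - F t) * P)) by (apply Rmult_le_pos; [lra | apply Rmult_le_pos; lra]).
    nra.
Qed.

(* Upper bound on the revenue of any equilibrium at any positive prices:
   summing the buyer bounds, the terms [(1 - x_i) prod_{j<>i} x_j] add up to
   at most one. *)
Lemma equilibrium_revenue_le (F : R -> R) (n : nat) (q q0 : R)
    (p : nat -> R) (T : nat -> ext) :
  regular F -> 1/2 <= q < 1 -> is_Finv F q q0 ->
  (forall i, (i < n)%nat -> 0 < p i) -> is_equilibrium F n p T ->
  revenue F n p T <= q0 * (1 + 2 * INR n * (1 - q)).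
Proof.
  intros Hreg Hq Hinv Hp HT.
  pose proof (quantile_pos F q q0 Hreg ltac:(lra) Hinv) as q0pos.
  set (x := fun j => Fe F (T j)).
  assert (xb : forall j, 0 <= x j <= 1) by (intro j; apply Fe_bounds, Hreg).
  unfold revenue.
  apply Rle_trans with (sum_list (map (fun i =>
    q0 * ((1 - x i) * prod_list (map x (others (seq 0 n) i))) + 2 * q0 * (1 - q)) (seq 0 n))).
  - apply sum_le; intros i Hi; apply in_seq in Hi.
    destruct (HT i ltac:(lia)) as [HInf HFin].
    apply buyer_revenue_le; [exact Hreg | exact Hq | exact Hinv | apply Hp; lia
                            | apply prod_bounds, xb | exact HInf | exact HFin].
  - rewrite sum_plus, sum_scal, sum_const, length_seq.
    pose proof (at_most_one_failure_le_1 x (seq 0 n) (seq_NoDup n 0) xb).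
    pose proof (prod_bounds x (seq 0 n) xb).
    nra.
Qed.

Definition demand (F : R -> R) (n : nat) (T : nat -> ext) : R :=
  sum_list (map (fun i => 1 - Fe F (T i)) (seq 0 n)).

Lemma uniform_revenue (F : R -> R) (n : nat) (p : R) (T : nat -> ext) :
  revenue F n (fun _ => p) T = p * demand F n T.
Proof. unfold revenue, demand; rewrite <- sum_scal; reflexivity. Qed.

(* In any equilibrium at a uniform price [p], either every buyer purchases
   with probability at least [1 - q], or some buyer [i] has threshold
   [p / P_i > q0 = F^-1(q)], i.e. [P_i < p / q0]; by the Weierstrass
   inequality [1 - demand <= P_i] in that case. *)
Lemma uniform_demand_ge (F : R -> R) (n : nat) (q q0 p : R) (T : nat -> ext) :
  is_cdf_nonneg F -> is_Finv F q q0 -> 0 < q0 -> 0 <= p ->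
  is_equilibrium F n (fun _ => p) T ->
  Rmin (INR n * (1 - q)) (1 - p / q0) <= demand F n T.
Proof.
  intros Hcdf [Hq0 _] q0pos Hp HT.
  pose proof Hcdf as [Hmono _].
  set (x := fun j => Fe F (T j)).
  assert (xb : forall j, 0 <= x j <= 1) by (intro j; apply Fe_bounds, Hcdf).
  destruct (classic (exists i, (i < n)%nat /\ q < x i)) as [[i [Hi Hxi]]|Hnone].
  - apply Rle_trans with (1 - p / q0); [apply Rmin_r|].
    destruct (HT i Hi) as [HInf HFin]; cbv zeta in HInf, HFin; fold x in HInf, HFin.
    set (P := prod_list (map x (neighbors n i))) in *.
    assert (HPS : 1 - demand F n T <= P).
    { apply Rle_trans with (1 - sum_list (map (fun j => 1 - x j) (neighbors n i))).
      - pose proof (sum_filter_le (fun j => 1 - x j) (fun j => negb (Nat.eqb j i)) (seq 0 n)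
                      ltac:(intro j; destruct (xb j); lra)).
        unfold demand, neighbors; change (fun j => 1 - Fe F (T j)) with (fun j => 1 - x j); lra.
      - apply prod_ge_one_minus_sum, xb. }
    assert (P <= p / q0); [|lra].
    destruct (Req_dec P 0) as [e|ne]; [rewrite e; unfold Rdiv; pose proof (Rinv_0_lt_compat q0 q0pos); nra|].
    assert (Ppos : 0 < P) by (pose proof (prod_bounds x (neighbors n i) xb) as HPb; fold P in HPb; lra).
    assert (Hxi_eq : x i = F (p / P)) by (unfold x; rewrite (HFin ne); reflexivity).
    assert (q0 < p / P).
    { destruct (Rlt_le_dec q0 (p / P)) as [h|h]; [exact h|].
      pose proof (Hmono (p / P) q0 h); lra. }
    apply Rmult_le_reg_r with (q0 / P); [apply Rdiv_lt_0_compat; lra|].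
    replace (P * (q0 / P)) with q0 by (field; lra).
    replace (p / q0 * (q0 / P)) with (p / P) by (field; lra); lra.
  - apply Rle_trans with (INR n * (1 - q)); [apply Rmin_l|].
    unfold demand; rewrite <- length_seq with (len := n) (start := 0%nat) at 1.
    rewrite Rmult_comm, <- sum_const.
    apply sum_le; intros j Hj; apply in_seq in Hj.
    assert (~ q < x j) by (intro h; apply Hnone; exists j; split; [lia | exact h]).
    unfold x in *; lra.
Qed.
Theorem theorem3p1 :
  exists c : R, 0 < c /\
  forall (n : nat) (F : R -> R) (q0 : R),
    (2 <= n)%nat ->
    regular F ->
    is_Finv F (1 - 1 / INR n) q0 ->
    let p := q0 * (1 - 1 / INR n) ^ (n - 1) in
    forall T : nat -> ext,
      is_equilibrium F n (fun _ => p) T ->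
      forall (p' : nat -> R) (T' : nat -> ext),
        (forall i, (i < n)%nat -> 0 < p' i) ->
        is_equilibrium F n p' T' ->
        c * revenue F n p' T' <= revenue F n (fun _ => p) T.
Proof.
  exists (1/27); split; [lra|].
  intros n F q0 Hn Hreg Hinv p T HT p' T' Hp' HT'.
  set (q := 1 - 1 / INR n) in *.
  assert (Hn2 : 2 <= INR n) by (replace 2 with (INR 2) by (simpl; ring); apply le_INR; exact Hn).
  assert (Hnq : INR n * (1 - q) = 1) by (unfold q; field; lra).
  assert (Hq : 1/2 <= q < 1).
  { unfold q; split; [|assert (0 < 1 / INR n) by (apply Rdiv_lt_0_compat; lra); lra].
    assert (1 / INR n <= 1 / 2) by (apply Rmult_le_reg_r with (INR n); [lra|]; field_simplify; lra).
    lra. }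
  pose proof (quantile_pos F q q0 Hreg ltac:(lra) Hinv) as q0pos.
  pose proof (discount_lower n Hn) as Hlow; pose proof (discount_upper n Hn) as Hup; fold q in Hlow, Hup.
  pose proof (equilibrium_revenue_le F n q q0 p' T' Hreg Hq Hinv Hp' HT') as Hbest.
  rewrite Rmult_assoc, Hnq in Hbest.
  assert (Hdemand : 1/3 <= demand F n T).
  { assert (Hp : 0 <= p) by (unfold p; nra).
    pose proof (uniform_demand_ge F n q q0 p T (proj1 Hreg) Hinv q0pos Hp HT) as Hmin.
    rewrite Hnq in Hmin.
    replace (p / q0) with (q ^ (n - 1)) in Hmin by (unfold p; field; lra).
    apply Rle_trans with (Rmin 1 (1 - q ^ (n - 1))); [apply Rmin_glb|]; lra. }
  rewrite uniform_revenue.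
  assert (q0 / 3 <= p) by (unfold p; nra).
  nra.
Qed.
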